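(* Let $(\mathcal{C}^{\bullet},\partial)$ be a cochain complex of real vector spaces with a compatible bigrading $\mathcal{C}^{k}=\bigoplus_{p+q=k}\mathcal{C}^{p,q}$, $\mathcal{C}^{p,q}=\{0\}$ whenever $p<0$ or $q<0$, and $\partial=\partial_{2,-1}+\partial_{1,0}+\partial_{0,1}$ with $\partial_{i,j}(\mathcal{C}^{p,q})\subseteq\mathcal{C}^{p+i,q+j}$. Then for all $p,q\in\mathbb{Z}$ with $p+q=k$, \[ E^{p,q}_{\infty}\cong\frac{\pi_{q}(Z^{k}(\mathcal{C},\partial))\cap\mathcal{C}^{p,q}}{\pi_{q}(B^{k}(\mathcal{C},\partial))\cap\mathcal{C}^{p,q}}. \]
   Context: $F^{p}\mathcal{C}:=\bigoplus_{i\geq p}\mathcal{C}^{i,j}$ and $F^{p}\mathcal{C}^{k}:=F^{p}\mathcal{C}\cap\mathcal{C}^{k}$; $E^{p,q}_{\infty}:=\dfrac{Z^{p+q}(\mathcal{C},\partial)\cap F^{p}\mathcal{C}^{p+q}+F^{p+1}\mathcal{C}^{p+q}}{B^{p+q}(\mathcal{C},\partial)\cap F^{p}\mathcal{C}^{p+q}+F^{p+1}\mathcal{C}^{p+q}}$ (the limit term of the spectral sequence of the filtered complex). $G^{q}\mathcal{C}:=\bigoplus_{j\geq q}\mathcal{C}^{i,j}$ and $\pi_{q}:\mathcal{C}\to G^{q}\mathcal{C}$ is the projection along the bigrading. $Z^{k},B^{k}$ denote $k$-cocycles and $k$-coboundaries. *)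

From HB Require Import structures.
From mathcomp Require Import all_boot all_order all_algebra.
From mathcomp Require Export reals.
Set Implicit Arguments. Unset Strict Implicit. Unset Printing Implicit Defensive.
Import Order.TTheory GRing.Theory Num.Theory.
Local Open Scope ring_scope.

(* The total space C = (+)_{p,q} C^{p,q} of the complex is modelled as an
   ambient real vector space V together with the family of projections
   P p q : V -> V onto the summands C^{p,q} along the bigrading. *)
Section BigradedComplex.
Variables (R : realType) (V : lmodType R).
Variable P : int -> int -> {linear V -> V}.

Definition inC (p q : int) (v : V) : Prop := P p q v = v.
Definition inDeg (k : int) (v : V) : Prop :=
  forall i j : int, i + j != k -> P i j v = 0.
(* v lies in F^p C = (+)_{i >= p} C^{i,j} *)
Definition inF (p : int) (v : V) : Prop :=
  forall i j : int, i < p -> P i j v = 0.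
(* w = pi_q v, where pi_q : C -> G^q C = (+)_{j >= q} C^{i,j} is the
   projection along the bigrading *)
Definition is_pi (q : int) (v w : V) : Prop :=
  forall i j : int, P i j w = if q <= j then P i j v else 0.

Variable d : {linear V -> V}.
Definition cocycle (k : int) (v : V) : Prop := inDeg k v /\ d v = 0.
Definition coboundary (k : int) (v : V) : Prop :=
  inDeg k v /\ exists u, inDeg (k - 1) u /\ d u = v.

Definition bigraded_complex (d21 d10 d01 : {linear V -> V}) : Prop :=
  [/\
      (forall p q p' q' v, P p q (P p' q' v) =
          if (p == p') && (q == q') then P p q v else 0),
      (forall v, exists s : seq (int * int),
          uniq s /\ v = \sum_(x <- s) P x.1 x.2 v),
      (forall p q v, (p < 0) || (q < 0) -> P p q v = 0) &
      (
      (forall v, d (d v) = 0) /\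
      (forall v, d v = d21 v + d10 v + d01 v) /\
      (forall p q v, inC p q v ->
          [/\ inC (p + 2) (q - 1) (d21 v),
              inC (p + 1) q (d10 v) &
              inC p (q + 1) (d01 v)]))].

(* E_infty^{p,q} = (Z^k cap F^p C^k + F^{p+1}C^k) / (B^k cap F^p C^k + F^{p+1}C^k) *)
Definition Einf_num (p k : int) (v : V) : Prop :=
  exists a b, v = a + b /\ cocycle k a /\ inF p a /\ inDeg k b /\ inF (p + 1) b.
Definition Einf_den (p k : int) (v : V) : Prop :=
  exists a b, v = a + b /\ coboundary k a /\ inF p a /\ inDeg k b /\ inF (p + 1) b.

Definition piZ_num (p q k : int) (w : V) : Prop :=
  inC p q w /\ exists z, cocycle k z /\ is_pi q z w.
Definition piB_den (p q k : int) (w : V) : Prop :=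
  inC p q w /\ exists z, coboundary k z /\ is_pi q z w.

End BigradedComplex.

(* For subspaces B <= A and B' <= A' of V: the quotients A/B and A'/B' are
   linearly isomorphic, i.e. there is a linear map f : A -> V with values in
   A' inducing a well-defined, injective and surjective map A/B -> A'/B'. *)
Definition quot_iso (R : realType) (V : lmodType R) (A B A' B' : V -> Prop) : Prop :=
  exists f : V -> V,
    [/\ (forall (r : R) a b, A a -> A b -> f (r *: a + b) = r *: f a + f b),
        (forall a, A a -> A' (f a)),
        (forall a, A a -> (B' (f a) <-> B a)) &
        (forall a', A' a' -> exists a, A a /\ B' (a' - f a))].

From HB Require Import structures.
From mathcomp Require Import all_boot all_order all_algebra.
From mathcomp Require Import reals.
From mathcomp Require Import zify.
Set Implicit Arguments.
Unset Strict Implicit.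
Import Order.TTheory GRing.Theory Num.Theory.
Local Open Scope ring_scope.

(* Only the bigrading matters: a vector of total degree k = p + q lying in
   F^p has components only in bidegrees (i, k - i) with i >= p, and among these
   exactly one, (p, q), also has second index >= q.  Hence on F^p C^k the
   projection pi_q is the projection onto C^{p,q}, and its kernel there is
   F^{p+1} C^k.  So x |-> P p q x maps the numerator and denominator of
   E_infty^{p,q} onto pi_q(Z^k) cap C^{p,q} and pi_q(B^k) cap C^{p,q}, with
   F^{p+1} C^k as the exact preimage of 0. *)

Section Bigrading.
Variables (R : realType) (V : lmodType R).
Variable P : int -> int -> {linear V -> V}.
Hypothesis P_orth : forall p q p' q' v,
  P p q (P p' q' v) = if (p == p') && (q == q') then P p q v else 0.

Lemma inC_P p q v : inC P p q (P p q v).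
Proof. by rewrite /inC P_orth !eqxx. Qed.

Lemma inDeg0 k : inDeg P k 0.
Proof. by move=> i j _; rewrite linear0. Qed.

Lemma inDegD k a b : inDeg P k a -> inDeg P k b -> inDeg P k (a + b).
Proof. by move=> Ha Hb i j Hij; rewrite linearD Ha ?Hb ?addr0. Qed.

Lemma inDegB k a b : inDeg P k a -> inDeg P k b -> inDeg P k (a - b).
Proof. by move=> Ha Hb i j Hij; rewrite linearB Ha ?Hb ?subr0. Qed.

Lemma inFD p a b : inF P p a -> inF P p b -> inF P p (a + b).
Proof. by move=> Ha Hb i j Hij; rewrite linearD Ha ?Hb ?addr0. Qed.

Lemma inFB p a b : inF P p a -> inF P p b -> inF P p (a - b).
Proof. by move=> Ha Hb i j Hij; rewrite linearB Ha ?Hb ?subr0. Qed.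

Lemma inF_succ p a : inF P (p + 1) a -> inF P p a.
Proof. by move=> Ha i j Hij; apply: Ha; lia. Qed.

Lemma inF_succ_P p q a : inF P (p + 1) a -> P p q a = 0.
Proof. by move=> Ha; apply: Ha; lia. Qed.

Lemma is_pi_P p q w z : is_pi P q z w -> inC P p q w -> P p q z = w.
Proof. by move=> Hpi Hw; have := Hpi p q; rewrite lexx Hw. Qed.

Section TotalDegree.
Variables p q k : int.
Hypothesis pqk : p + q = k.

Lemma is_pi_inF x : inDeg P k x -> inF P p x -> is_pi P q x (P p q x).
Proof.
move=> Hx HFx i j; rewrite P_orth.
have [-> | Hip] := eqVneq i p; have [-> | Hjq] := eqVneq j q;
  rewrite /= ?lexx //; symmetry.
- by case: leP => // Hqj; apply: Hx; apply/eqP; lia.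
- case: (ltP i p) => Hip'; first exact: HFx.
  by apply: Hx; apply/eqP; lia.
- case: leP => // Hqj; case: (ltP i p) => Hip'; first exact: HFx.
  by apply: Hx; apply/eqP; lia.
Qed.

Lemma inF_succ_inF x :
  inDeg P k x -> inF P p x -> P p q x = 0 -> inF P (p + 1) x.
Proof.
move=> Hx HFx Hxpq i j Hij.
have [Hip | Hip] := ltP i p; first exact: HFx.
have -> : i = p by lia.
have [-> // | Hjq] := eqVneq j q.
by apply: Hx; apply/eqP; lia.
Qed.

Lemma inF_is_pi z w : inDeg P k z -> is_pi P q z w -> inC P p q w -> inF P p z.
Proof.
move=> Hz Hpi Hw i j Hij.
have [Hijk | Hijk] := eqVneq (i + j) k; last exact: Hz.
have := Hpi i j; rewrite (_ : q <= j = true); last by apply/idP; lia.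
move=> <-; rewrite -Hw P_orth.
by rewrite (_ : i == p = false) //; apply/eqP; lia.
Qed.

(* [S] stands for Z^k or B^k: [Fsum S] is S cap F^p C^k + F^{p+1} C^k, and
   [piC S] is pi_q(S) cap C^{p,q}. *)
Variable S : V -> Prop.
Hypothesis S_inDeg : forall z, S z -> inDeg P k z.

Definition Fsum (a : V) : Prop :=
  exists a0 b0, a = a0 + b0 /\ S a0 /\ inF P p a0 /\ inDeg P k b0 /\ inF P (p + 1) b0.

Definition piC (w : V) : Prop := inC P p q w /\ exists z, S z /\ is_pi P q z w.

Lemma Fsum_inDeg_inF a : Fsum a -> inDeg P k a /\ inF P p a.
Proof.
move=> [a0 [b0 [-> [Sa0 [HFa0 [Hb0 HFb0]]]]]].
by split; [apply: inDegD; first exact: S_inDeg | apply: inFD => //; apply: inF_succ].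
Qed.

Lemma piC_P a : Fsum a -> piC (P p q a).
Proof.
move=> [a0 [b0 [-> [Sa0 [HFa0 [_ HFb0]]]]]].
split; first exact: inC_P.
exists a0; split => //.
by rewrite linearD (inF_succ_P q HFb0) addr0; apply: is_pi_inF => //; apply: S_inDeg.
Qed.

Lemma Fsum_of_piC a : inDeg P k a -> inF P p a -> piC (P p q a) -> Fsum a.
Proof.
move=> Ha HFa [Hw [z [Sz Hpi]]].
have Hz := S_inDeg Sz.
exists z, (a - z); split; first by rewrite addrC subrK.
do 3?split => //; first exact: inF_is_pi Hpi Hw.
  exact: inDegB.
apply: inF_succ_inF; first exact: inDegB.
  by apply: inFB => //; apply: inF_is_pi Hpi Hw.
by rewrite linearB (is_pi_P Hpi Hw) subrr.
Qed.

Lemma piC0 : S 0 -> piC 0.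
Proof.
move=> S0; split; first by rewrite /inC linear0.
by exists 0; split => // i j; rewrite !linear0; case: ifP.
Qed.

End TotalDegree.
End Bigrading.

Lemma coboundary0 (R : realType) (V : lmodType R) P (d : {linear V -> V}) k :
  coboundary P d k 0.
Proof.
by split; [exact: inDeg0 | exists 0; split; [exact: inDeg0 | rewrite linear0]].
Qed.

Theorem lemma2p1 (R : realType) (V : lmodType R)
    (P : int -> int -> {linear V -> V}) (d d21 d10 d01 : {linear V -> V})
    (HC : bigraded_complex P d d21 d10 d01)
    (p q k : int) (Hk : p + q = k) :
  quot_iso (Einf_num P d p k) (Einf_den P d p k)
           (piZ_num P d p q k) (piB_den P d p q k).
Proof.
case: HC => P_orth _ _ _.
have Zdeg : forall z, cocycle P d k z -> inDeg P k z by move=> z [].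
have Bdeg : forall z, coboundary P d k z -> inDeg P k z by move=> z [].
exists (P p q); split.
- by move=> r a b _ _; rewrite linearP.
- move=> a; exact: (piC_P P_orth Hk Zdeg).
- move=> a /(Fsum_inDeg_inF Zdeg) [Ha HFa]; split.
    exact: (Fsum_of_piC P_orth Hk Bdeg Ha HFa).
  exact: (piC_P P_orth Hk Bdeg).
- move=> w [Hw [z [Zz Hpi]]].
  have Hz := Zdeg _ Zz.
  have Pz := is_pi_P Hpi Hw.
  exists z; split.
    apply: (Fsum_of_piC P_orth Hk Zdeg Hz (inF_is_pi P_orth Hk Hz Hpi Hw)).
    by rewrite Pz; split => //; exists z.
  by rewrite -Pz subrr; apply: piC0; apply: coboundary0.
Qed.
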